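(* Let $K$ be a field of characteristic $0$ and let $f(x)\in K[x,x^{-1}]$ be a non-constant Laurent polynomial. Then there exists a positive integer $N$ such that every element $c\in K$ can be written as $c=\epsilon_1 f(a_1)+\cdots+\epsilon_N f(a_N)$ with $a_1,\dots,a_N\in K^*$ and $\epsilon_1,\dots,\epsilon_N\in\{1,-1\}$. In particular, for $K=\mathbb{Q}$, $f$ satisfies the EWP.
   Context: A rational function $f\in\mathbb{Q}(x)$ satisfies the EWP if for some $N\ge1$ every rational number can be written as $\epsilon_1f(a_1)+\cdots+\epsilon_Nf(a_N)$ with $\epsilon_i\in\{1,-1\}$ and $a_i\in\mathbb{Q}$ not poles of $f$. *)

From HB Require Import structures.
From mathcomp Require Import all_boot all_order all_algebra.
Set Implicit Arguments. Unset Strict Implicit. Unset Printing Implicit Defensive.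
Import Order.TTheory GRing.Theory Num.Theory.
Local Open Scope ring_scope.

(* A Laurent polynomial f in K[x, x^{-1}] is represented as p(x) / x^k with
   p : {poly K} and k : nat (every Laurent polynomial has this form).
   Its value at a nonzero a : K is p.[a] / a^k. *)
Definition laurent_eval (K : fieldType) (p : {poly K}) (k : nat) (a : K) : K :=
  p.[a] / a ^+ k.

(* f = p / x^k is constant in K[x, x^{-1}] iff p = c * x^k for some c : K. *)
Definition laurent_nonconstant (K : fieldType) (p : {poly K}) (k : nat) : Prop :=
  forall c : K, p != c *: 'X^k.

From HB Require Import structures.
From mathcomp Require Import all_boot all_order all_algebra.
From mathcomp Require Import ring zify.
Import Order.TTheory GRing.Theory Num.Theory.
Set Implicit Arguments. Unset Strict Implicit. Unset Printing Implicit Defensive.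
Local Open Scope ring_scope.

(* Write f = p / x^k and pick r <> k with p_r <> 0.  A signed sum of dilates
   f(lam x) equals sum_i p_i w_i x^(i-k), where the weights w_i are
   multiplicative under products of such sums; the sum 2^k f(2x) - 2^j f(x)
   (written with 2^k + 2^j signed terms) has weights 2^i - 2^j, so a product
   of these over j <> r isolates D x^(r-k) with D <> 0.  Taking x = z or
   x = 1/z, every value D z^n (n = |r - k| > 0) is a signed sum of a fixed
   number of values of f.  Each finite difference of representable values is
   representable, and n - 1 finite differences turn the polynomial 2D z^n into
   a linear polynomial whose slope is nonzero in characteristic 0, which takes
   every value. *)

Lemma sumr_nseq (V : nmodType) (T : Type) n (a : T) (F : T -> V) :
  \sum_(x <- nseq n a) F x = F a *+ n.
Proof. by rewrite big_nseq; exact: iter_addr_0. Qed.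

Section CharZero.
Variables (K : fieldType) (charK0 : [pchar K] =i pred0).

Lemma natf_eq0 n : (n%:R == 0 :> K) = (n == 0)%N.
Proof. by move/pcharf0P: charK0. Qed.

Lemma natf_inj : injective (fun n : nat => n%:R : K).
Proof.
move=> m n /= eq_mn; wlog le_mn : m n eq_mn / (m <= n)%N.
  by move=> hwlog; case/orP: (leq_total m n) => ?; [|symmetry]; apply: hwlog.
have : (n - m)%N%:R == 0 :> K by rewrite natrB // eq_mn subrr.
by rewrite natf_eq0 subn_eq0 => le_nm; apply/eqP; rewrite eqn_leq le_mn.
Qed.

End CharZero.

Section FiniteDifference.
Variable K : fieldType.

Definition fdiff (q : {poly K}) : {poly K} := \sum_(i < size q) q^`N(i.+1).

Lemma horner_fdiff (q : {poly K}) y : (fdiff q).[y] = q.[y + 1] - q.[y].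
Proof.
rewrite (@nderiv_taylor_wide _ (size q).+1) //; last exact: commr1.
rewrite big_ord_recl nderivn0 expr0 mulr1 /fdiff horner_sum.
under [X in _ = _ + X - _]eq_bigr => i _ do rewrite expr1n mulr1.
by rewrite addrC addKr.
Qed.

Lemma coef_fdiff (q : {poly K}) j :
  (fdiff q)`_j = \sum_(i < size q) q`_(i.+1 + j) *+ 'C(i.+1 + j, i.+1).
Proof. by rewrite /fdiff coef_sum; apply: eq_bigr => i _; rewrite coef_nderivn. Qed.

Lemma fdiff_leq_size (q : {poly K}) m :
  (size q <= m.+2)%N -> (size (fdiff q) <= m.+1)%N /\ (fdiff q)`_m = q`_m.+1 *+ m.+1.
Proof.
move=> le_q; split.
  apply/leq_sizeP => j le_mj; rewrite coef_fdiff big1 // => i _.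
  by rewrite nth_default ?mul0rn //; apply: leq_trans le_q _; lia.
rewrite coef_fdiff; case size_q: (size q) => [|s].
  by rewrite big_ord0 nth_default ?mul0rn ?size_q.
rewrite big_ord_recl /= big1 ?addr0; first by rewrite add1n bin1.
by move=> i _; rewrite nth_default ?mul0rn // size_q /bump /=; lia.
Qed.

Hypothesis charK0 : [pchar K] =i pred0.

Lemma size_fdiff (q : {poly K}) m : size q = m.+2 -> size (fdiff q) = m.+1.
Proof.
move=> size_q; have [le_size coef_m] := fdiff_leq_size (eq_leq size_q).
apply/eqP; rewrite eqn_leq le_size ltnNge; apply/negP => /leq_sizeP/(_ m (leqnn m)).
apply/eqP; rewrite coef_m -mulr_natr mulf_neq0 ?(natf_eq0 charK0) //.
by rewrite -[m.+1]/(m.+2.-1) -size_q -lead_coefE lead_coef_eq0 -size_poly_gt0 size_q.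
Qed.

End FiniteDifference.

(* A pair [(eps, a)] encodes the term [eps * f a] of a signed sum. *)
Definition sign_point (K : fieldType) (b : K * K) : bool :=
  ((b.1 == 1) || (b.1 == -1)) && (b.2 != 0).

Lemma sign_point_opp (K : fieldType) (b : K * K) : sign_point (- b.1, b.2) = sign_point b.
Proof. by rewrite /sign_point /= eqr_oppLR eqr_opp orbC. Qed.

Lemma sign_point_mul (K : fieldType) (a b : K * K) :
  sign_point a -> sign_point b -> sign_point (a.1 * b.1, a.2 * b.2).
Proof.
case/andP=> sa a0 /andP[sb b0]; rewrite /sign_point /= mulf_neq0 // andbT.
by case/orP: sa => /eqP->; case/orP: sb => /eqP->;
  rewrite ?mul1r ?mulN1r ?opprK eqxx ?orbT.
Qed.

Section DilationWeights.
Variable K : fieldType.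

Definition dil_weight (k i : nat) (P : seq (K * K)) : K :=
  \sum_(q <- P) q.1 * q.2 ^+ i / q.2 ^+ k.

Definition dil_prod (L P : seq (K * K)) : seq (K * K) :=
  [seq (a.1 * b.1, a.2 * b.2) | a <- L, b <- P].

Lemma dil_weight_prod k i L P :
  dil_weight k i (dil_prod L P) = dil_weight k i L * dil_weight k i P.
Proof.
rewrite /dil_weight /dil_prod big_allpairs_dep big_distrl /=; apply: eq_bigr => a _.
rewrite big_distrr /=; apply: eq_bigr => b _.
by rewrite !exprMn invfM; ring.
Qed.

Lemma all_sign_point_prod L P :
  all (@sign_point K) L -> all (@sign_point K) P -> all (@sign_point K) (dil_prod L P).
Proof.
move=> /allP sL /allP sP; apply/allP => _ /allpairsP[[a b] /= [aL bP ->]].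
exact: sign_point_mul (sL a aL) (sP b bP).
Qed.

Definition dil_kill (k j : nat) : seq (K * K) :=
  nseq (2 ^ k) (1, 2) ++ nseq (2 ^ j) (-1, 1).

Definition dil_kill_all (k : nat) (J : seq nat) : seq (K * K) :=
  foldr (fun j => dil_prod (dil_kill k j)) [:: (1, 1)] J.

Hypothesis charK0 : [pchar K] =i pred0.

Lemma dil_weight_kill k i j : dil_weight k i (dil_kill k j) = 2 ^+ i - 2 ^+ j.
Proof.
rewrite /dil_weight big_cat !sumr_nseq !expr1n divr1 !mul1r mulN1r.
rewrite -[_ *+ 2 ^ k]mulr_natr -[_ *+ 2 ^ j]mulr_natr !natrX mulN1r divfK //.
by rewrite expf_neq0 // (natf_eq0 charK0).
Qed.

Lemma dil_weight_kill_all k i J :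
  dil_weight k i (dil_kill_all k J) = \prod_(j <- J) (2 ^+ i - 2 ^+ j).
Proof.
elim: J => [|j J IH] /=; last by rewrite dil_weight_prod IH dil_weight_kill big_cons.
by rewrite /dil_weight big_seq1 big_nil !expr1n divr1 mulr1.
Qed.

Lemma all_sign_point_kill_all k J : all (@sign_point K) (dil_kill_all k J).
Proof.
elim: J => [|j J IH] /=; first by rewrite /sign_point /= eqxx oner_neq0.
apply: all_sign_point_prod IH; rewrite all_cat !all_nseq /sign_point /= !eqxx.
by rewrite (natf_eq0 charK0) oner_neq0 !orbT.
Qed.

Lemma pow2_sub_eq0 i j : ((2 : K) ^+ i - 2 ^+ j == 0) = (i == j).
Proof.
rewrite subr_eq0 -!natrX; apply/eqP/eqP => [/(natf_inj charK0)/eqP|-> //].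
by rewrite eqn_exp2l // => /eqP.
Qed.

End DilationWeights.

Definition dilate (K : fieldType) (P : seq (K * K)) (x : K) : seq (K * K) :=
  [seq (q.1, q.2 * x) | q <- P].

Lemma all_sign_point_dilate (K : fieldType) (P : seq (K * K)) x :
  x != 0 -> all (@sign_point K) P -> all (@sign_point K) (dilate P x).
Proof.
move=> x0 /allP P_sign; apply/allP => _ /mapP[q qP ->].
by case/andP: (P_sign q qP) => sq q0; rewrite /sign_point sq mulf_neq0.
Qed.

Lemma laurent_nonconstant_coef (K : fieldType) (p : {poly K}) k :
  laurent_nonconstant p k -> exists2 r, r != k & p`_r != 0.
Proof.
move=> nonconst; pose d := p - p`_k *: 'X^k.
have : d`_(size d).-1 != 0 by rewrite -lead_coefE lead_coef_eq0 subr_eq0.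
rewrite coefB coefZ coefXn; have [->|ne_rk] := eqVneq (size d).-1 k.
  by rewrite mulr1 subrr eqxx.
by rewrite mulr0 subr0; exists (size d).-1.
Qed.

Section SignedSums.
Variables (K : fieldType) (p : {poly K}) (k : nat).

Definition signed_sum (s : seq (K * K)) : K :=
  \sum_(b <- s) b.1 * laurent_eval p k b.2.

Definition signed_repr (N : nat) (c : K) : Prop :=
  exists s : seq (K * K), [/\ size s = N, all (@sign_point K) s & c = signed_sum s].

Lemma signed_repr_add N1 N2 c1 c2 :
  signed_repr N1 c1 -> signed_repr N2 c2 -> signed_repr (N1 + N2) (c1 + c2).
Proof.
move=> [s1 [<- s1_sign ->]] [s2 [<- s2_sign ->]]; exists (s1 ++ s2).
by rewrite size_cat all_cat s1_sign s2_sign /signed_sum big_cat.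
Qed.

Lemma signed_repr_opp N c : signed_repr N c -> signed_repr N (- c).
Proof.
move=> [s [<- s_sign ->]]; exists [seq (- b.1, b.2) | b <- s]; split.
- by rewrite size_map.
- by rewrite all_map (eq_all (@sign_point_opp K)).
- by rewrite /signed_sum big_map -sumrN; apply: eq_bigr => b _; rewrite mulNr.
Qed.

Lemma signed_repr_sub N c1 c2 :
  signed_repr N c1 -> signed_repr N c2 -> signed_repr (N + N) (c1 - c2).
Proof. by move=> rep1 /signed_repr_opp; exact: signed_repr_add. Qed.

Lemma signed_repr_zero N : signed_repr (N + N) 0.
Proof.
have rep : signed_repr N (laurent_eval p k 1 *+ N).
  exists (nseq N (1, 1)); rewrite size_nseq all_nseq /signed_sum sumr_nseq mul1r.
  by rewrite /sign_point /= eqxx oner_neq0 orbT.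
by rewrite -(subrr (laurent_eval p k 1 *+ N)); exact: signed_repr_sub.
Qed.

Lemma signed_sum_dilate P x :
  signed_sum (dilate P x) = (\sum_(i < size p) p`_i * dil_weight k i P * x ^+ i) / x ^+ k.
Proof.
rewrite /signed_sum /dilate big_map /dil_weight big_distrl /=.
under eq_bigr => q _ do rewrite /laurent_eval horner_coef big_distrl big_distrr /=.
rewrite exchange_big /=; apply: eq_bigr => i _.
rewrite !big_distrr !big_distrl /=; apply: eq_bigr => q _.
by rewrite !exprMn invfM; ring.
Qed.

Hypothesis charK0 : [pchar K] =i pred0.

Lemma signed_sum_isolate r : p`_r != 0 ->
  exists2 P : seq (K * K), all (@sign_point K) P &
  exists2 D : K, D != 0 & forall x, signed_sum (dilate P x) = D * x ^+ r / x ^+ k.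
Proof.
move=> pr0; have lt_r : (r < size p)%N.
  by rewrite ltnNge; apply: contra pr0 => le_pr; rewrite nth_default.
pose J := [seq j <- iota 0 (size p) | j != r].
exists (dil_kill_all K k J); first exact: all_sign_point_kill_all.
exists (p`_r * dil_weight k r (dil_kill_all K k J)).
  rewrite mulf_neq0 // dil_weight_kill_all // prodf_seq_neq0.
  by apply/allP => j; rewrite mem_filter pow2_sub_eq0 // eq_sym => /andP[].
move=> x; rewrite signed_sum_dilate (bigD1 (Ordinal lt_r)) //= big1 ?addr0 // => i ne_ir.
have -> : dil_weight k i (dil_kill_all K k J) = 0.
  rewrite dil_weight_kill_all //; apply/eqP; rewrite prodf_seq_eq0; apply/hasP.
  exists (val i); last by rewrite /= subrr.
  rewrite mem_filter mem_iota add0n ltn_ord leq0n !andbT.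
  by apply: contra ne_ir => /eqP eq_ir; apply/eqP/val_inj.
by rewrite mulr0 mul0r.
Qed.

Lemma signed_repr_monomial r : r != k -> p`_r != 0 ->
  exists n M (D : K),
    [/\ (0 < n)%N, D != 0 & forall z, z != 0 -> signed_repr M (D * z ^+ n)].
Proof.
move=> ne_rk pr0; have [P P_sign [D D0 sum_P]] := signed_sum_isolate pr0.
have rep_P x : x != 0 -> signed_repr (size P) (signed_sum (dilate P x)).
  by move=> x0; exists (dilate P x); rewrite size_map all_sign_point_dilate.
have [lt_kr|lt_rk|eq_kr] := ltngtP k r; last by rewrite eq_kr eqxx in ne_rk.
- exists (r - k)%N, (size P), D; split; rewrite ?subn_gt0 // => z z0.
  suff -> : D * z ^+ (r - k) = signed_sum (dilate P z) by exact: rep_P.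
  by rewrite sum_P -{2}(subnK (ltnW lt_kr)) exprD mulrA mulfK ?expf_neq0.
- exists (k - r)%N, (size P), D; split; rewrite ?subn_gt0 // => z z0.
  suff -> : D * z ^+ (k - r) = signed_sum (dilate P z^-1) by apply: rep_P; rewrite invr_neq0.
  rewrite sum_P !exprVn invrK -{2}(subnK (ltnW lt_rk)) exprD.
  by rewrite mulrA mulrAC divfK ?expf_neq0.
Qed.

(* The factor 2 makes room for [z = 0]: the value [0] is represented by an even
   number of terms [f 1 - f 1 + ...]. *)
Lemma signed_repr_double_monomial n M (D : K) :
  (0 < n)%N -> (forall z, z != 0 -> signed_repr M (D * z ^+ n)) ->
  forall z, signed_repr (M + M) (D *+ 2 * z ^+ n).
Proof.
move=> n_gt0 rep z; have [->|z0] := eqVneq z 0.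
  by rewrite expr0n gtn_eqF // mulr0; exact: signed_repr_zero.
by rewrite mulr2n mulrDl; apply: signed_repr_add; exact: rep.
Qed.

Lemma signed_repr_poly_surj (q : {poly K}) m N :
  size q = m.+2 -> (forall y, signed_repr N q.[y]) -> forall c, signed_repr (2 ^ m * N) c.
Proof.
elim: m q N => [|m IH] q N size_q rep c.
  have q1 : q`_1 != 0.
    by rewrite -[1%N]/(2.-1) -size_q -lead_coefE lead_coef_eq0 -size_poly_gt0 size_q.
  have -> : c = q.[(c - q`_0) / q`_1].
    rewrite horner_coef size_q !big_ord_recl big_ord0 /= expr0 expr1 mulr1 addr0.
    by rewrite mulrC divfK // addrC subrK.
  by rewrite mul1n; exact: rep.
rewrite expnSr -mulnA mul2n -addnn; apply: (IH (fdiff q)) => [|y].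
  exact: size_fdiff.
by rewrite horner_fdiff; exact: signed_repr_sub.
Qed.

Lemma signed_repr_ordinal N : (forall c, signed_repr N c) ->
  (0 < N)%N /\
  forall c : K, exists (a eps : 'I_N -> K),
    (forall i, a i != 0) /\ (forall i, eps i = 1 \/ eps i = -1) /\
    c = \sum_(i < N) eps i * laurent_eval p k (a i).
Proof.
move=> rep; split.
  rewrite lt0n; apply/eqP => N0; have [s [/eqP]] := rep 1.
  by rewrite N0 size_eq0 => /eqP-> _ /eqP; rewrite /signed_sum big_nil oner_eq0.
move=> c; have [s [size_s s_sign ->]] := rep c.
pose b (i : 'I_N) := nth (1, 1) s i.
have b_sign i : sign_point (b i) by apply/(allP s_sign)/mem_nth; rewrite size_s.
exists (fun i => (b i).2), (fun i => (b i).1); split; [|split].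
- by move=> i; case/andP: (b_sign i).
- by move=> i; case/andP: (b_sign i) => /orP[] /eqP-> _; [left|right].
- by rewrite /signed_sum (big_nth (1, 1)) big_mkord size_s.
Qed.

End SignedSums.

Theorem theorem3p1 (K : fieldType) (charK0 : [pchar K] =i pred0)
    (p : {poly K}) (k : nat) (Hnc : laurent_nonconstant p k) :
  exists N : nat, (0 < N)%N /\
    forall c : K, exists (a : 'I_N -> K) (eps : 'I_N -> K),
      (forall i, a i != 0) /\ (forall i, eps i = 1 \/ eps i = -1) /\
      c = \sum_(i < N) eps i * laurent_eval p k (a i).
Proof.
have [r ne_rk pr0] := laurent_nonconstant_coef Hnc.
have [n [M [D [n_gt0 D0 rep_D]]]] := signed_repr_monomial charK0 ne_rk pr0.
have size_q : size ((D *+ 2) *: 'X^n) = n.-1.+2.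
  by rewrite size_scale ?size_polyXn ?prednK // -mulr_natr mulf_neq0 ?(natf_eq0 charK0).
exists (2 ^ n.-1 * (M + M))%N; apply: signed_repr_ordinal => c.
apply: (signed_repr_poly_surj charK0 size_q) => y.
by rewrite hornerZ hornerXn; exact: signed_repr_double_monomial.
Qed.
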